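(* Let $\rho>-1$ and let a BIMS channel have capacity $C\in[0,1]$ and function $F(\rho)$. Then: (i) $F^{\rm bec}(\rho;C)\le F(\rho)\le F^{\rm bsc}(\rho;C)$. (ii) If $-1<\rho<0$, then $C^{\rm bsc}\bigl(F(\rho)\bigr)\le C\le C^{\rm bec}\bigl(F(\rho)\bigr)$. (iii) If $\rho>0$, then $C^{\rm bec}\bigl(F(\rho)\bigr)\le C\le C^{\rm bsc}\bigl(F(\rho)\bigr)$. The extremes in (i)–(iii) are attained by the BEC and the BSC, respectively. Moreover, for every pair $(C,t)$ with $C\in[0,1]$ and $F^{\rm bec}(\rho;C)\le t\le F^{\rm bsc}(\rho;C)$ there exists a BIMS channel with capacity $C$ and $F(\rho)=t$; conversely, if this inequality fails for $(C,t)$, no BIMS channel has capacity $C$ and $F(\rho)=t$.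
   Context: A BIMS (binary-input memoryless symmetric) channel is a memoryless channel with input alphabet $\{x_0,x_1\}$, finite output alphabet $\mathcal Y$ and transition probabilities $P_{Y|X}(y|x)$. It is symmetric in Gallager's sense: the columns of the $2\times|\mathcal Y|$ transition matrix (rows indexed by inputs) can be partitioned into submatrices such that, in each submatrix, every row is a permutation of every other row and every column is a permutation of every other column. Inputs are equiprobable, $P_X(x_0)=P_X(x_1)=\tfrac12$, and all logarithms are base $2$. The capacity $C$ of the channel is the mutual information $I(X;Y)$ under this input distribution. For $\rho>-1$, Gallager's function is defined by $$F(\rho)=\sum_{x}\tfrac12\sum_{y:\,P_{Y|X}(y|x)>0}P_{Y|X}(y|x)\left(\frac{\tfrac12\sum_{x'}P_{Y|X}(y|x')^{1/(1+\rho)}}{P_{Y|X}(y|x)^{1/(1+\rho)}}\right)^{\rho},$$ and $E_0(\rho)=-\log F(\rho)$. Let $h(p)=-p\log p-(1-p)\log(1-p)$ denote the binary entropy function, and let $h^{-1}$ be its inverse on $[0,\tfrac12]$. For $C\in[0,1]$ define $$F^{\rm bec}(\rho;C)=1+(2^{-\rho}-1)C,$$ $$F^{\rm bsc}(\rho;C)=2^{-\rho}\Bigl(\varepsilon^{1/(1+\rho)}+(1-\varepsilon)^{1/(1+\rho)}\Bigr)^{1+\rho},\qquad \varepsilon=h^{-1}(1-C).$$ These are the values of $F(\rho)$ for the binary erasure channel (BEC) and the binary symmetric channel (BSC) of capacity $C$. For $\rho\ne0$, $C^{\rm bec}(\cdot)$ and $C^{\rm bsc}(\cdot)$ denote the inverse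 functions of $C\mapsto F^{\rm bec}(\rho;C)$ and $C\mapsto F^{\rm bsc}(\rho;C)$ on $[0,1]$, respectively. *)

From Stdlib Require Import Reals Lra List Permutation ClassicalEpsilon.
Import ListNotations.
Open Scope R_scope.

Definition sumR (n : nat) (f : nat -> R) : R :=
  fold_right Rplus 0 (map f (seq 0 n)).

Definition log2 (x : R) : R := ln x / ln 2.

(** Real power with the convention 0^a = 0 (used only for a > 0). *)
Definition rpow (x a : R) : R := if Rle_dec x 0 then 0 else Rpower x a.

(** A channel: inputs x0 = false, x1 = true; outputs 0..n-1; W x y = P(y|x). *)
Definition is_channel (n : nat) (W : bool -> nat -> R) : Prop :=
  (forall x y, 0 <= W x y) /\ (forall x, sumR n (W x) = 1).

(** Gallager symmetry: a partition of the columns (via block labels [part])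
    such that in each submatrix every row is a permutation of every other row,
    and every column is a permutation of every other column. *)
Definition block (n : nat) (part : nat -> nat) (k : nat) : list nat :=
  filter (fun y => Nat.eqb (part y) k) (seq 0 n).

Definition gallager_symmetric (n : nat) (W : bool -> nat -> R) : Prop :=
  exists part : nat -> nat,
    (forall k, Permutation (map (W false) (block n part k))
                           (map (W true) (block n part k))) /\
    (forall y y', (y < n)%nat -> (y' < n)%nat -> part y = part y' ->
       (W false y = W false y' /\ W true y = W true y') \/
       (W false y = W true y' /\ W true y = W false y')).

Definition is_bims (n : nat) (W : bool -> nat -> R) : Prop :=
  is_channel n W /\ gallager_symmetric n W.

Definition avg2 (f : bool -> R) : R := / 2 * f false + / 2 * f true.

(** Capacity = I(X;Y) with equiprobable inputs. *)
Definition capacity (n : nat) (W : bool -> nat -> R) : R :=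
  avg2 (fun x => sumR n (fun y =>
    if Rlt_dec 0 (W x y)
    then W x y * log2 (W x y / avg2 (fun x' => W x' y))
    else 0)).

Definition gallagerF (rho : R) (n : nat) (W : bool -> nat -> R) : R :=
  avg2 (fun x => sumR n (fun y =>
    if Rlt_dec 0 (W x y)
    then W x y *
         Rpower (avg2 (fun x' => rpow (W x' y) (/ (1 + rho)))
                 / Rpower (W x y) (/ (1 + rho))) rho
    else 0)).

Definition E0 (rho : R) (n : nat) (W : bool -> nat -> R) : R :=
  - log2 (gallagerF rho n W).

Definition xlog2 (x : R) : R := if Rle_dec x 0 then 0 else x * log2 x.
Definition hb (p : R) : R := - xlog2 p - xlog2 (1 - p).

Definition hinv (v : R) : R :=
  epsilon (inhabits 0) (fun p => 0 <= p <= / 2 /\ hb p = v).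

Definition Fbec (rho C : R) : R := 1 + (Rpower 2 (- rho) - 1) * C.

Definition Fbsc (rho C : R) : R :=
  let eps := hinv (1 - C) in
  Rpower 2 (- rho) *
  Rpower (rpow eps (/ (1 + rho)) + rpow (1 - eps) (/ (1 + rho))) (1 + rho).

Definition Cbec (rho t : R) : R :=
  epsilon (inhabits 0) (fun c => 0 <= c <= 1 /\ Fbec rho c = t).
Definition Cbsc (rho t : R) : R :=
  epsilon (inhabits 0) (fun c => 0 <= c <= 1 /\ Fbsc rho c = t).

(** BEC with capacity C (erasure probability 1 - C): outputs 0, 1, erasure 2. *)
Definition bec (C : R) (x : bool) (y : nat) : R :=
  match y with
  | 0%nat => if x then 0 else C
  | 1%nat => if x then C else 0
  | 2%nat => 1 - C
  | _ => 0
  end.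

Definition bsc (C : R) (x : bool) (y : nat) : R :=
  let eps := hinv (1 - C) in
  match y with
  | 0%nat => if x then eps else 1 - eps
  | 1%nat => if x then 1 - eps else eps
  | _ => 0
  end.

From Stdlib Require Import Reals Lra Lia List Permutation ClassicalEpsilon FunctionalExtensionality.
From Stdlib Require Ranalysis5.
From Coquelicot Require Import Coquelicot.
Open Scope R_scope.

(* Write s = 1/(1+rho).  An output letter y is a column (a, b) = (W(y|x0), W(y|x1))
   of mass m = (a+b)/2 and crossover q = a/(a+b); it contributes m * Gbin q to
   F(rho) and m * Cbin q to the capacity, where
     Gbin q = 2^-rho (q^s + (1-q)^s)^(1+rho)   and   Cbin q = 1 - h(q)
   are the values of F and C for the BSC with crossover q.  As the masses sum to 1,
   part (i) reduces to two facts about the curve q |-> (Cbin q, Gbin q), q in [0,1/2]: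
   it lies above the chord through its endpoints (Cbin, Gbin) = (0, 1) and
   (1, 2^-rho), which is the BEC line, and below each of its tangents (Gbin is a
   concave function of Cbin).  Both are proved in the parametrisation
   q = 1/(1+e^(2x)), x >= 0, where Cbin and Gbin become explicit hyperbolic
   expressions whose derivative ratio dG/dC = ln 2 * slope x has a nonincreasing
   factor [slope].
   Parts (ii) and (iii) follow from (i) because C |-> Fbec rho C and C |-> Fbsc rho C
   are strictly monotone, in the same direction, determined by the sign of rho.
   Finally, the channel using a BSC with crossover q with probability w and an
   erasure otherwise has capacity w * Cbin q and F = w * Gbin q + 1 - w; the BEC and
   the BSC are the cases q = 0 and w = 1, and an intermediate value argument in q
   realises every admissible pair (C, t). *)

Lemma sumR_S n f : sumR (S n) f = sumR n f + f n.
Proof.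
  unfold sumR. rewrite seq_S, map_app, fold_right_app. simpl.
  generalize (f n). induction (map f (seq 0 n)) as [|a l IH]; intro c; simpl.
  - ring.
  - rewrite IH. ring.
Qed.

Lemma sumR_ext n f g : (forall y, (y < n)%nat -> f y = g y) -> sumR n f = sumR n g.
Proof.
  induction n as [|n IH]; intro h; [reflexivity|].
  rewrite !sumR_S, IH by (intros; apply h; lia). rewrite h by lia. reflexivity.
Qed.

Lemma sumR_plus n f g : sumR n (fun y => f y + g y) = sumR n f + sumR n g.
Proof. induction n as [|n IH]; [cbn; ring|]. rewrite !sumR_S, IH. ring. Qed.

Lemma sumR_scal n k f : sumR n (fun y => k * f y) = k * sumR n f.
Proof. induction n as [|n IH]; [cbn; ring|]. rewrite !sumR_S, IH. ring. Qed.

Lemma sumR_le n f g : (forall y, (y < n)%nat -> f y <= g y) -> sumR n f <= sumR n g.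
Proof.
  induction n as [|n IH]; intro h; [cbn; lra|]. rewrite !sumR_S.
  assert (sumR n f <= sumR n g) by (apply IH; intros; apply h; lia).
  assert (f n <= g n) by (apply h; lia). lra.
Qed.

Lemma sumR_zero n : sumR n (fun _ => 0) = 0.
Proof. induction n as [|n IH]; [reflexivity|]. rewrite sumR_S, IH. ring. Qed.

Lemma sumR_nonneg n f : (forall y, (y < n)%nat -> 0 <= f y) -> 0 <= sumR n f.
Proof. intro h. rewrite <- (sumR_zero n). apply sumR_le. auto. Qed.

Lemma sumR_le_eq n f g : (forall y, (y < n)%nat -> f y <= g y) ->
  sumR n f = sumR n g -> forall y, (y < n)%nat -> f y = g y.
Proof.
  induction n as [|n IH]; intros h e y hy; [lia|]. rewrite !sumR_S in e.
  assert (sumR n f <= sumR n g) by (apply sumR_le; intros; apply h; lia).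
  assert (f n <= g n) by (apply h; lia).
  destruct (Nat.eq_dec y n) as [->|ne]; [lra|].
  apply IH; [intros; apply h; lia | lra | lia].
Qed.

Lemma derive_continuity f df t : is_derive f t df -> continuity_pt f t.
Proof.
  intro h. apply continuity_pt_filterlim, (ex_derive_continuous f t). exists df; exact h.
Qed.

Lemma continuity_pt_local f g x d : 0 < d -> (forall y, Rabs (y - x) < d -> f y = g y) ->
  continuity_pt g x -> continuity_pt f x.
Proof.
  intros hd he hg. apply continuity_pt_filterlim. apply continuity_pt_filterlim in hg.
  apply (continuous_ext_loc f g x); auto.
  exists (mkposreal d hd). intros y hy. symmetry. apply he. exact hy.
Qed.

Lemma continuity_pt_eps f x :
  (forall e, 0 < e -> exists d, 0 < d /\ forall y, Rabs (y - x) < d -> Rabs (f y - f x) < e) ->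
  continuity_pt f x.
Proof.
  intros h e he. destruct (h e he) as [d [hd hh]]. exists d. split; auto.
  intros y [_ hy]. apply hh, hy.
Qed.

Lemma mvt_nonpos (f df : R -> R) a b : a <= b ->
  (forall t, a <= t <= b -> is_derive f t (df t)) ->
  (forall t, a < t < b -> df t <= 0) -> f b <= f a.
Proof.
  intros hab hd hs. destruct (Req_dec a b) as [<-|ne]; [lra|].
  destruct (MVT_cor2 f df a b) as [c [he hc]]; [lra| |].
  - intros t ht. apply is_derive_Reals, hd. lra.
  - assert (df c <= 0) by (apply hs; lra). nra.
Qed.

Lemma mvt_neg (f df : R -> R) a b : a < b ->
  (forall t, a <= t <= b -> is_derive f t (df t)) ->
  (forall t, a < t < b -> df t < 0) -> f b < f a.
Proof.
  intros hab hd hs. destruct (MVT_cor2 f df a b) as [c [he hc]]; [lra| |].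
  - intros t ht. apply is_derive_Reals, hd. lra.
  - assert (df c < 0) by (apply hs; lra). nra.
Qed.

Lemma mvt_nonneg (f df : R -> R) a b : a <= b ->
  (forall t, a <= t <= b -> is_derive f t (df t)) ->
  (forall t, a < t < b -> 0 <= df t) -> f a <= f b.
Proof.
  intros hab hd hs.
  enough (- f b <= - f a) by lra.
  apply (mvt_nonpos (fun t => - f t) (fun t => - df t) a b hab).
  - intros t ht. apply (is_derive_opp f), hd, ht.
  - intros t ht. specialize (hs t ht). lra.
Qed.

Lemma bound_at_left_end g a M d : continuity_pt g a -> 0 < d ->
  (forall t, a < t < a + d -> g t <= M) -> g a <= M.
Proof.
  intros hc hd hq. destruct (Rle_dec (g a) M) as [r|n]; auto. exfalso.
  destruct (hc (g a - M)) as [e [he hh]]; [lra|].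
  set (t := a + Rmin d e / 2).
  assert (0 < Rmin d e) by (apply Rmin_glb_lt; auto).
  pose proof (Rmin_l d e). pose proof (Rmin_r d e).
  assert (hgt : Rabs (g t - g a) < g a - M).
  { apply hh. split; [split; [exact I | unfold t; lra]|].
    simpl; unfold R_dist, t. rewrite Rabs_right; lra. }
  assert (g t <= M) by (apply hq; unfold t; lra).
  unfold Rabs in hgt; destruct Rcase_abs in hgt; lra.
Qed.

Lemma strict_incr_left_end g a b : continuity_pt g a ->
  (forall u v, a < u < v -> v <= b -> g u < g v) ->
  forall v, a < v <= b -> g a < g v.
Proof.
  intros hc hs v hv. set (m := (a + v) / 2).
  apply (Rle_lt_trans _ (g m)); [|apply hs; unfold m; lra].
  apply (bound_at_left_end g a _ (m - a)); [auto | unfold m; lra |].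
  intros t ht. left. apply hs; unfold m in *; lra.
Qed.

Lemma ivt_on_interval f a b t : a <= b ->
  (forall x, a <= x <= b -> continuity_pt f x) -> f a <= t <= f b ->
  exists x, a <= x <= b /\ f x = t.
Proof.
  intros hab hc ht.
  destruct (Req_dec (f a) t) as [e|na]; [exists a; split; [lra|auto]|].
  destruct (Req_dec (f b) t) as [e|nb]; [exists b; split; [lra|auto]|].
  assert (a < b) by (destruct (Req_dec a b) as [<-|]; lra).
  destruct (Ranalysis5.IVT_interv (fun x => f x - t) a b) as [x [hx e]]; try lra.
  - intros x hx. apply (continuity_pt_minus f (fun _ => t)); [auto|].
    apply continuity_pt_const. intros u v; reflexivity.
  - exists x. split; auto. lra.
Qed.

Lemma ln2_pos : 0 < ln 2.
Proof. rewrite <- ln_1. apply ln_increasing; lra. Qed.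

Lemma rpow_exp x a : 0 < x -> rpow x a = exp (a * ln x).
Proof. intro h. unfold rpow. destruct (Rle_dec x 0); [lra | reflexivity]. Qed.

Lemma rpow_0 a : rpow 0 a = 0.
Proof. unfold rpow. destruct (Rle_dec 0 0); [reflexivity | lra]. Qed.

Lemma rpow_nonneg x a : 0 <= rpow x a.
Proof. unfold rpow. destruct (Rle_dec x 0); [lra | left; apply exp_pos]. Qed.

Lemma rpow_gt0 x a : 0 < x -> 0 < rpow x a.
Proof. intro h. rewrite rpow_exp by auto. apply exp_pos. Qed.

Lemma rpow_mult t q a : 0 < t -> 0 <= q -> rpow (t * q) a = Rpower t a * rpow q a.
Proof.
  intros ht hq. destruct (Req_dec q 0) as [->|n].
  - rewrite Rmult_0_r, rpow_0. ring.
  - rewrite !rpow_exp by nra. unfold Rpower. rewrite ln_mult, <- exp_plus by lra.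
    f_equal; ring.
Qed.

Lemma rpow_continuity a p : 0 < a -> continuity_pt (fun p => rpow p a) p.
Proof.
  intro ha. destruct (Rtotal_order p 0) as [hn|[->|hp]].
  - apply (continuity_pt_local _ (fun _ => 0) p (-p)); [lra| |].
    + intros y hy. unfold rpow. destruct (Rle_dec y 0); auto.
      unfold Rabs in hy; destruct Rcase_abs in hy; lra.
    + apply continuity_pt_const. intros u v; reflexivity.
  - apply continuity_pt_eps. intros e he. exists (exp (ln e / a)). split; [apply exp_pos|].
    intros y hy. rewrite rpow_0, Rminus_0_r in *. unfold rpow.
    destruct (Rle_dec y 0); [rewrite Rabs_R0; auto|].
    rewrite Rabs_right in hy by lra. rewrite Rabs_right by (left; apply exp_pos).
    rewrite <- (exp_ln e) by auto. apply exp_increasing.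
    assert (ln y < ln e / a) by (rewrite <- (ln_exp (ln e / a)); apply ln_increasing; lra).
    apply (Rmult_lt_compat_l a) in H; auto. field_simplify in H; lra.
  - apply (continuity_pt_local _ (fun p => exp (a * ln p)) p p); auto.
    + intros y hy. apply rpow_exp. unfold Rabs in hy; destruct Rcase_abs in hy; lra.
    + apply (derive_continuity _ (a * / p * exp (a * ln p))). auto_derive; auto. ring.
Qed.

Lemma xlog2_pos p : 0 < p -> xlog2 p = p * (ln p / ln 2).
Proof. intro h. unfold xlog2, log2. destruct (Rle_dec p 0); [lra | reflexivity]. Qed.

Lemma xlog2_0 : xlog2 0 = 0.
Proof. unfold xlog2. destruct (Rle_dec 0 0); [reflexivity | lra]. Qed.

Lemma ln_lt_self y : 0 < y -> ln y < y.
Proof.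
  intro h. destruct (Req_dec (ln y) 0) as [e|e]; [rewrite e; lra|].
  pose proof (exp_ineq1 (ln y) e) as h1. rewrite exp_ln in h1; lra.
Qed.

Lemma xlnx_sqrt_bound y : 0 < y < 1 -> - (y * ln y) < 2 * sqrt y.
Proof.
  intro hy.
  assert (hs : 0 < sqrt y) by (apply sqrt_lt_R0; lra).
  assert (hsq : sqrt y * sqrt y = y) by (apply sqrt_sqrt; lra).
  assert (h1 : ln (/ sqrt y) < / sqrt y) by (apply ln_lt_self, Rinv_0_lt_compat; auto).
  rewrite ln_Rinv in h1 by auto.
  assert (h2 : ln y = 2 * ln (sqrt y)) by (rewrite <- hsq at 1; rewrite ln_mult by auto; ring).
  assert (- ln (sqrt y) * sqrt y < 1).
  { apply (Rmult_lt_compat_r (sqrt y)) in h1; auto. rewrite Rinv_l in h1; lra. }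
  rewrite h2, <- hsq at 1. nra.
Qed.

Lemma xlog2_continuity p : continuity_pt xlog2 p.
Proof.
  pose proof ln2_pos. destruct (Rtotal_order p 0) as [hn|[->|hp]].
  - apply (continuity_pt_local _ (fun _ => 0) p (-p)); [lra| |].
    + intros y hy. unfold xlog2. destruct (Rle_dec y 0); auto.
      unfold Rabs in hy; destruct Rcase_abs in hy; lra.
    + apply continuity_pt_const. intros u v; reflexivity.
  - apply continuity_pt_eps. intros e he. set (r := e * ln 2 / 2).
    assert (0 < r) by (unfold r; apply Rmult_lt_0_compat; [apply Rmult_lt_0_compat|]; lra).
    exists (Rmin 1 (r * r)). split; [apply Rmin_glb_lt; nra|].
    intros y hy. rewrite xlog2_0, !Rminus_0_r in *. unfold xlog2.
    destruct (Rle_dec y 0); [rewrite Rabs_R0; auto|].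
    rewrite Rabs_right in hy by lra.
    pose proof (Rmin_l 1 (r * r)). pose proof (Rmin_r 1 (r * r)).
    assert (hs : sqrt y < r) by (apply Rsqr_incrst_0; unfold Rsqr; try lra;
      [rewrite sqrt_sqrt by lra; lra | left; apply sqrt_lt_R0; lra]).
    pose proof (xlnx_sqrt_bound y ltac:(lra)).
    assert (hl : ln y < 0) by (rewrite <- ln_1; apply ln_increasing; lra).
    assert (0 < / ln 2) by (apply Rinv_0_lt_compat; lra).
    assert (ln y * / ln 2 < 0) by nra.
    unfold log2. rewrite Rabs_left by (unfold Rdiv; nra).
    apply (Rmult_lt_reg_r (ln 2)); auto.
    replace (- (y * (ln y / ln 2)) * ln 2) with (- (y * ln y)) by (field; lra).
    unfold r in hs. lra.
  - apply (continuity_pt_local _ (fun p => p * (ln p / ln 2)) p p); auto.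
    + intros y hy. apply xlog2_pos. unfold Rabs in hy; destruct Rcase_abs in hy; lra.
    + apply (derive_continuity _ (1 * (ln p / ln 2) + p * (/ p / ln 2))).
      auto_derive; auto. lra.
Qed.

Lemma xlog2_neg p : 0 < p < 1 -> xlog2 p < 0.
Proof.
  intro h. rewrite xlog2_pos by lra. pose proof ln2_pos.
  assert (ln p < 0) by (rewrite <- ln_1; apply ln_increasing; lra).
  assert (0 < / ln 2) by (apply Rinv_0_lt_compat; lra).
  assert (ln p * / ln 2 < 0) by nra. unfold Rdiv. nra.
Qed.

Lemma xlog2_1 : xlog2 1 = 0.
Proof. rewrite xlog2_pos, ln_1 by lra. lra. Qed.

Lemma cosh_pos x : 0 < cosh x.
Proof. unfold cosh. pose proof (exp_pos x); pose proof (exp_pos (-x)); lra. Qed.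

Lemma cosh_even t : cosh (- t) = cosh t.
Proof. unfold cosh. rewrite Ropp_involutive. lra. Qed.

Lemma sinh_derive t : is_derive sinh t (cosh t).
Proof. apply is_derive_Reals, derivable_pt_lim_sinh. Qed.

Lemma cosh_derive t : is_derive cosh t (sinh t).
Proof. apply is_derive_Reals, derivable_pt_lim_cosh. Qed.

Lemma cosh_abs_le t u : Rabs t <= u -> cosh t <= cosh u.
Proof.
  assert (mono : forall t u, 0 <= t <= u -> cosh t <= cosh u).
  { intros a b hab. apply (mvt_nonneg cosh sinh a b); [lra | intros; apply cosh_derive|].
    intros x hx. rewrite <- sinh_0. left. apply sinh_lt. lra. }
  intro h. unfold Rabs in h. destruct Rcase_abs.
  - rewrite <- cosh_even. apply mono. lra.
  - apply mono. lra.
Qed.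

Lemma sinh_tangent x y : 0 <= x -> - x <= y -> (y - x) * cosh x <= sinh y - sinh x.
Proof.
  intros hx hy.
  set (g := fun t => sinh t - t * cosh x).
  assert (hd : forall t, is_derive g t (cosh t - cosh x)).
  { intro t. apply (is_derive_minus sinh (fun t => t * cosh x)); [apply sinh_derive|].
    auto_derive; auto; ring. }
  enough (g x <= g y) by (unfold g in *; lra).
  destruct (Rle_dec x y).
  - apply (mvt_nonneg g (fun t => cosh t - cosh x) x y); auto. intros t ht.
    assert (cosh x <= cosh t) by (apply cosh_abs_le; rewrite Rabs_right; lra). lra.
  - apply (mvt_nonpos g (fun t => cosh t - cosh x) y x); [lra | auto |]. intros t ht.
    assert (cosh t <= cosh x) by (apply cosh_abs_le; unfold Rabs; destruct Rcase_abs; lra). lra.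
Qed.

(** * The BSC curve in hyperbolic coordinates

   With s = 1/(1+rho) and x >= 0 (x = 0 is the useless channel, x -> oo the
   noiseless one), the BSC with crossover 1/(1+e^(2x)) has
     Gallager function  Ghyp x = cosh(s x)^(1+rho) / cosh x,
     capacity           Chyp x = (x tanh x - ln cosh x) / ln 2.
   Their derivatives satisfy dGhyp = ln 2 * slope * dChyp with slope nonincreasing
   on (0, oo); this is the concavity of F in terms of C along the BSC curve. *)

Definition coshpow (rho x : R) : R := exp (rho * ln (cosh (/ (1 + rho) * x))).
Definition Ghyp (rho x : R) : R := exp ((1 + rho) * ln (cosh (/ (1 + rho) * x))) / cosh x.
Definition Chyp (x : R) : R := (x * (sinh x / cosh x) - ln (cosh x)) / ln 2.
Definition dGhyp (rho x : R) : R :=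
  coshpow rho x * sinh ((/ (1 + rho) - 1) * x) / (cosh x * cosh x).
Definition dChyp (x : R) : R := x / (cosh x * cosh x * ln 2).
Definition slope (rho x : R) : R := coshpow rho x * sinh ((/ (1 + rho) - 1) * x) / x.
Definition dslope (rho x : R) : R :=
  coshpow rho x / (x * x * cosh (/ (1 + rho) * x)) *
  ((/ (1 + rho) - 1) * x * cosh x - (sinh ((2 * / (1 + rho) - 1) * x) - sinh x) / 2).

Lemma exp_pow_succ rho z : 0 < z -> exp ((1 + rho) * ln z) = exp (rho * ln z) * z.
Proof.
  intro hz. replace ((1 + rho) * ln z) with (rho * ln z + ln z) by ring.
  rewrite exp_plus, exp_ln; auto.
Qed.

Lemma Ghyp_derive rho x : -1 < rho -> is_derive (Ghyp rho) x (dGhyp rho x).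
Proof.
  intros hr. set (s := / (1 + rho)).
  pose proof (cosh_pos (s * x)). pose proof (cosh_pos x).
  unfold Ghyp, dGhyp, coshpow. fold s. unfold cosh, sinh in *.
  auto_derive; [repeat split; lra|].
  replace ((s - 1) * x) with (s * x + - x) by ring.
  unfold Rdiv in *. rewrite exp_pow_succ by lra.
  repeat rewrite ?exp_plus, ?exp_Ropp in *.
  assert (hX := exp_pos x). assert (hY := exp_pos (s * x)).
  set (X := exp x) in *. set (Y := exp (s * x)) in *.
  replace s with (/ (1 + rho)) by reflexivity.
  field. repeat split; try lra; nra.
Qed.

Lemma Chyp_derive x : is_derive Chyp x (dChyp x).
Proof.
  pose proof (cosh_pos x). pose proof ln2_pos.
  unfold Chyp, dChyp. unfold cosh, sinh in *.
  auto_derive; [repeat split; lra|].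
  rewrite !exp_Ropp in *. unfold Rdiv in *.
  assert (hX := exp_pos x). set (X := exp x) in *.
  field. repeat split; try lra; nra.
Qed.

Lemma slope_derive rho x : -1 < rho -> x <> 0 -> is_derive (slope rho) x (dslope rho x).
Proof.
  intros hr hx. set (s := / (1 + rho)).
  pose proof (cosh_pos (s * x)). pose proof (cosh_pos x).
  unfold slope, dslope, coshpow. fold s. unfold cosh, sinh in *.
  auto_derive; [repeat split; lra|].
  replace ((s - 1) * x) with (s * x + - x) by ring.
  replace ((2 * s - 1) * x) with (s * x + s * x + - x) by ring.
  repeat rewrite ?exp_plus, ?exp_Ropp in *. unfold Rdiv in *.
  assert (hX := exp_pos x). assert (hY := exp_pos (s * x)).
  set (X := exp x) in *. set (Y := exp (s * x)) in *.
  replace s with (/ (1 + rho)) by reflexivity.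
  field. repeat split; try lra; nra.
Qed.

Lemma Ghyp_0 rho : Ghyp rho 0 = 1.
Proof. unfold Ghyp. rewrite Rmult_0_r, cosh_0, ln_1, Rmult_0_r, exp_0. field. Qed.

Lemma Chyp_0 : Chyp 0 = 0.
Proof. unfold Chyp. rewrite cosh_0, ln_1. pose proof ln2_pos. field. lra. Qed.

Lemma dChyp_pos t : 0 < t -> 0 < dChyp t.
Proof.
  intro h. unfold dChyp. pose proof ln2_pos. pose proof (cosh_pos t).
  apply Rdiv_lt_0_compat; [auto|]. apply Rmult_lt_0_compat; [nra | auto].
Qed.

Lemma dGhyp_ratio rho t : t <> 0 -> dGhyp rho t = ln 2 * slope rho t * dChyp t.
Proof.
  intro ht. unfold dGhyp, slope, dChyp. pose proof ln2_pos. pose proof (cosh_pos t).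
  field. repeat split; lra.
Qed.

Lemma dslope_nonpos rho x : -1 < rho -> 0 < x -> dslope rho x <= 0.
Proof.
  intros hr hx. unfold dslope. set (s := / (1 + rho)).
  assert (hs : 0 < s) by (apply Rinv_0_lt_compat; lra).
  pose proof (sinh_tangent x ((2 * s - 1) * x) ltac:(lra) ltac:(nra)).
  assert (0 <= coshpow rho x / (x * x * cosh (s * x))).
  { left. apply Rdiv_lt_0_compat; [apply exp_pos|].
    pose proof (cosh_pos (s * x)). apply Rmult_lt_0_compat; nra. }
  apply Rmult_le_0_l; auto. nra.
Qed.

Lemma slope_antitone rho x y : -1 < rho -> 0 < x <= y -> slope rho y <= slope rho x.
Proof.
  intros hr hxy. apply (mvt_nonpos (slope rho) (dslope rho)); try lra.
  - intros t ht. apply slope_derive; lra.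
  - intros t ht. apply dslope_nonpos; lra.
Qed.

Lemma Ghyp_minus_linear_derive rho k t : -1 < rho ->
  is_derive (fun u => Ghyp rho u - k * Chyp u) t (dGhyp rho t - k * dChyp t).
Proof.
  intro hr. apply (is_derive_minus (Ghyp rho) (fun u => k * Chyp u)); [apply Ghyp_derive; auto|].
  apply (is_derive_scal Chyp t k), Chyp_derive.
Qed.

(* Since dChyp > 0 on (0, oo), this derivative has the sign of ln 2 * slope - k. *)
Lemma slope_sign_derivative rho k t : t <> 0 ->
  dGhyp rho t - k * dChyp t = (ln 2 * slope rho t - k) * dChyp t.
Proof. intro ht. rewrite dGhyp_ratio by auto. ring. Qed.

Lemma Ghyp_tangent rho x0 x : -1 < rho -> 0 < x0 -> 0 <= x ->
  Ghyp rho x <= Ghyp rho x0 + ln 2 * slope rho x0 * (Chyp x - Chyp x0).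
Proof.
  intros hr h0 hx. set (k := ln 2 * slope rho x0).
  set (E := fun u => Ghyp rho u - k * Chyp u).
  assert (hd : forall t, is_derive E t (dGhyp rho t - k * dChyp t))
    by (intro; apply Ghyp_minus_linear_derive; auto).
  enough (E x <= E x0) by (unfold E in *; lra).
  pose proof ln2_pos.
  destruct (Rle_dec x x0).
  - apply (mvt_nonneg E (fun t => dGhyp rho t - k * dChyp t) x x0); auto. intros t ht.
    rewrite slope_sign_derivative by lra. unfold k.
    pose proof (slope_antitone rho t x0 hr ltac:(lra)).
    pose proof (dChyp_pos t ltac:(lra)). apply Rmult_le_pos; [|lra].
    enough (ln 2 * slope rho x0 <= ln 2 * slope rho t) by lra.
    apply Rmult_le_compat_l; lra.
  - apply (mvt_nonpos E (fun t => dGhyp rho t - k * dChyp t) x0 x); [lra | auto |]. intros t ht.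
    rewrite slope_sign_derivative by lra. unfold k.
    pose proof (slope_antitone rho x0 t hr ltac:(lra)).
    pose proof (dChyp_pos t ltac:(lra)).
    assert (ln 2 * slope rho t <= ln 2 * slope rho x0) by (apply Rmult_le_compat_l; lra).
    nra.
Qed.

Lemma Ghyp_minus_linear_unimodal rho k x : -1 < rho -> 0 <= x ->
  Ghyp rho 0 - k * Chyp 0 <= Ghyp rho x - k * Chyp x \/
  (forall y, x <= y -> Ghyp rho y - k * Chyp y <= Ghyp rho x - k * Chyp x).
Proof.
  intros hr hx. set (E := fun u => Ghyp rho u - k * Chyp u).
  assert (hd : forall t, is_derive E t (dGhyp rho t - k * dChyp t))
    by (intro; apply Ghyp_minus_linear_derive; auto).
  destruct (Req_dec x 0) as [->|hx0]; [left; lra|].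
  pose proof ln2_pos.
  destruct (Rle_dec k (ln 2 * slope rho x)).
  - left. apply (mvt_nonneg E (fun t => dGhyp rho t - k * dChyp t) 0 x hx); auto. intros t ht.
    rewrite slope_sign_derivative by lra.
    pose proof (slope_antitone rho t x hr ltac:(lra)).
    pose proof (dChyp_pos t ltac:(lra)). apply Rmult_le_pos; [|lra].
    enough (ln 2 * slope rho x <= ln 2 * slope rho t) by lra.
    apply Rmult_le_compat_l; lra.
  - right. intros y hy. apply (mvt_nonpos E (fun t => dGhyp rho t - k * dChyp t) x y hy); auto. intros t ht.
    rewrite slope_sign_derivative by lra.
    pose proof (slope_antitone rho x t hr ltac:(lra)).
    pose proof (dChyp_pos t ltac:(lra)).
    assert (ln 2 * slope rho t <= ln 2 * slope rho x) by (apply Rmult_le_compat_l; lra).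
    nra.
Qed.

Lemma dGhyp_sign rho t : -1 < rho -> 0 < t ->
  (0 < rho -> dGhyp rho t < 0) /\ (rho < 0 -> 0 < dGhyp rho t).
Proof.
  intros hr ht. pose proof (cosh_pos t).
  assert (hp : 0 < coshpow rho t / (cosh t * cosh t))
    by (apply Rdiv_lt_0_compat; [apply exp_pos | nra]).
  assert (e : dGhyp rho t = coshpow rho t / (cosh t * cosh t) * sinh ((/ (1 + rho) - 1) * t))
    by (unfold dGhyp; field; lra).
  rewrite e. split; intro hs.
  - assert (/ (1 + rho) < 1) by (rewrite <- Rinv_1; apply Rinv_lt_contravar; lra).
    assert (sinh ((/ (1 + rho) - 1) * t) < 0) by (rewrite <- sinh_0; apply sinh_lt; nra).
    nra.
  - assert (1 < / (1 + rho)) by (rewrite <- Rinv_1; apply Rinv_lt_contravar; lra).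
    assert (0 < sinh ((/ (1 + rho) - 1) * t)) by (rewrite <- sinh_0; apply sinh_lt; nra).
    nra.
Qed.

Lemma Ghyp_strict rho x y : -1 < rho -> 0 <= x < y ->
  (0 < rho -> Ghyp rho y < Ghyp rho x) /\ (rho < 0 -> Ghyp rho x < Ghyp rho y).
Proof.
  intros hr hxy. split; intro hs.
  - apply (mvt_neg (Ghyp rho) (dGhyp rho)); [lra | intros; apply Ghyp_derive; auto |].
    intros t ht. apply (dGhyp_sign rho t hr); lra.
  - enough (- Ghyp rho y < - Ghyp rho x) by lra.
    apply (mvt_neg (fun t => - Ghyp rho t) (fun t => - dGhyp rho t)); [lra| |].
    + intros t _. apply (is_derive_opp (Ghyp rho)), Ghyp_derive; auto.
    + intros t ht. pose proof (proj2 (dGhyp_sign rho t hr ltac:(lra)) hs). lra.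
Qed.

Lemma Chyp_strict x y : 0 <= x < y -> Chyp x < Chyp y.
Proof.
  intros h. enough (- Chyp y < - Chyp x) by lra.
  apply (mvt_neg (fun t => - Chyp t) (fun t => - dChyp t)); [lra| |].
  - intros t _. apply (is_derive_opp Chyp), Chyp_derive.
  - intros t ht. pose proof (dChyp_pos t ltac:(lra)). lra.
Qed.

(** * The BSC curve in crossover coordinates

   Gbin rho q and Cbin q are F(rho) and the capacity of the BSC with crossover q.
   The map x |-> logistic x = 1/(1+e^(2x)) sends [0, oo) onto (0, 1/2] and turns
   them into Ghyp and Chyp; its inverse on (0, 1/2] is [logit]. *)

Definition Gbin (rho p : R) : R :=
  Rpower 2 (- rho) * Rpower (rpow p (/ (1 + rho)) + rpow (1 - p) (/ (1 + rho))) (1 + rho).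
Definition Cbin (p : R) : R := 1 - hb p.
Definition logistic (x : R) : R := / (1 + exp (2 * x)).
Definition logit (q : R) : R := ln ((1 - q) / q) / 2.

Lemma logistic_split x :
  logistic x = exp (- x) / (exp x + exp (- x)) /\ 1 - logistic x = exp x / (exp x + exp (- x)).
Proof.
  unfold logistic. rewrite exp_Ropp. replace (2 * x) with (x + x) by ring. rewrite exp_plus.
  assert (hX := exp_pos x). split; field; split; nra.
Qed.

Lemma logistic_bounds x : 0 < logistic x /\ 0 < 1 - logistic x.
Proof.
  destruct (logistic_split x) as [-> ->].
  pose proof (exp_pos x). pose proof (exp_pos (- x)).
  split; apply Rdiv_lt_0_compat; lra.
Qed.

Lemma ln_logistic x : ln (logistic x) = - x - ln (exp x + exp (- x)) /\
                      ln (1 - logistic x) = x - ln (exp x + exp (- x)).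
Proof.
  destruct (logistic_split x) as [-> ->].
  pose proof (exp_pos x). pose proof (exp_pos (- x)).
  unfold Rdiv. rewrite !ln_mult, !ln_Rinv, !ln_exp by (try apply Rinv_0_lt_compat; lra).
  split; ring.
Qed.

Lemma logistic_strict_anti x y : x < y -> logistic y < logistic x.
Proof.
  intro h. unfold logistic. pose proof (exp_pos (2 * x)). pose proof (exp_pos (2 * y)).
  apply Rinv_lt_contravar; [nra|]. assert (exp (2 * x) < exp (2 * y)) by (apply exp_increasing; lra).
  lra.
Qed.

Lemma logit_spec q : 0 < q <= / 2 -> 0 <= logit q /\ logistic (logit q) = q.
Proof.
  intro h. unfold logit. split.
  - assert (1 <= (1 - q) / q) by (apply (Rmult_le_reg_r q); [lra | field_simplify; lra]).
    assert (0 <= ln ((1 - q) / q)); [|lra].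
    rewrite <- ln_1. destruct (Req_dec 1 ((1 - q) / q)) as [<-|]; [lra|].
    left. apply ln_increasing; lra.
  - unfold logistic. replace (2 * (ln ((1 - q) / q) / 2)) with (ln ((1 - q) / q)) by field.
    rewrite exp_ln by (apply Rdiv_lt_0_compat; lra). field. lra.
Qed.

Lemma logit_strict_anti q1 q2 : 0 < q1 < q2 -> q2 <= / 2 -> logit q2 < logit q1.
Proof.
  intros h1 h2. destruct (logit_spec q1) as [_ e1]; [lra|]. destruct (logit_spec q2) as [_ e2]; [lra|].
  destruct (Rlt_le_dec (logit q2) (logit q1)) as [l|l]; auto.
  destruct (Req_dec (logit q1) (logit q2)) as [e|ne]; [rewrite <- e1, <- e2, e in h1; lra|].
  pose proof (logistic_strict_anti (logit q1) (logit q2) ltac:(lra)). lra.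
Qed.

Lemma Gbin_logistic rho x : -1 < rho -> Gbin rho (logistic x) = Ghyp rho x.
Proof.
  intro hr. destruct (logistic_bounds x) as [p1 p2]. destruct (ln_logistic x) as [l1 l2].
  set (s := / (1 + rho)). set (K := exp x + exp (- x)).
  assert (hK : 0 < K) by (unfold K; pose proof (exp_pos x); pose proof (exp_pos (- x)); lra).
  unfold Gbin. fold s. rewrite !rpow_exp, l1, l2 by auto. fold K.
  assert (e1 : exp (s * (- x - ln K)) + exp (s * (x - ln K)) =
               exp (- (s * ln K)) * (2 * cosh (s * x))).
  { unfold cosh. replace (s * (- x - ln K)) with (- (s * ln K) + - (s * x)) by ring.
    replace (s * (x - ln K)) with (- (s * ln K) + s * x) by ring. rewrite !exp_plus. field. }
  pose proof (cosh_pos (s * x)).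
  rewrite e1. unfold Ghyp, Rpower. fold s.
  rewrite ln_mult, ln_exp, ln_mult by (try apply exp_pos; lra).
  replace (cosh x) with (exp (ln K - ln 2))
    by (unfold cosh, Rminus; rewrite exp_plus, exp_Ropp, !exp_ln; fold K; auto; lra).
  unfold Rdiv. rewrite <- exp_Ropp, <- !exp_plus. f_equal.
  unfold s. field. lra.
Qed.

Lemma Cbin_logistic x : Cbin (logistic x) = Chyp x.
Proof.
  destruct (logistic_bounds x) as [p1 p2]. destruct (ln_logistic x) as [l1 l2].
  destruct (logistic_split x) as [s1 s2]. pose proof ln2_pos.
  unfold Cbin, hb. rewrite !xlog2_pos, l1, l2 by auto.
  unfold Chyp, cosh, sinh. set (K := exp x + exp (- x)) in *.
  assert (hK : 0 < K) by (unfold K; pose proof (exp_pos x); pose proof (exp_pos (- x)); lra).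
  replace ((exp x - exp (- x)) / 2 / (K / 2)) with (1 - 2 * logistic x)
    by (rewrite s1; field_simplify_eq; [unfold K; ring | lra]).
  replace (ln (K / 2)) with (ln K - ln 2) by (unfold Rdiv; rewrite ln_mult, ln_Rinv; lra).
  field. lra.
Qed.

Lemma Gbin_Ghyp rho q : -1 < rho -> 0 < q <= / 2 -> Gbin rho q = Ghyp rho (logit q).
Proof. intros hr h. destruct (logit_spec q h) as [_ e]. rewrite <- Gbin_logistic, e; auto. Qed.

Lemma Cbin_Chyp q : 0 < q <= / 2 -> Cbin q = Chyp (logit q).
Proof. intros h. destruct (logit_spec q h) as [_ e]. rewrite <- Cbin_logistic, e; auto. Qed.

Lemma Gbin_half rho : -1 < rho -> Gbin rho (/ 2) = 1.
Proof.
  intro hr. rewrite Gbin_Ghyp by (auto; lra).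
  replace (logit (/ 2)) with 0 by (unfold logit; replace ((1 - / 2) / / 2) with 1 by field;
    rewrite ln_1; field).
  apply Ghyp_0.
Qed.

Lemma Gbin_0 rho : Gbin rho 0 = Rpower 2 (- rho).
Proof.
  unfold Gbin. rewrite rpow_0, Rminus_0_r, rpow_exp, ln_1, Rmult_0_r, exp_0, Rplus_0_l by lra.
  unfold Rpower at 2. rewrite ln_1, Rmult_0_r, exp_0. ring.
Qed.

Lemma Cbin_0 : Cbin 0 = 1.
Proof. unfold Cbin, hb. rewrite Rminus_0_r, xlog2_0, xlog2_1. ring. Qed.

Lemma Cbin_half : Cbin (/ 2) = 0.
Proof.
  rewrite Cbin_Chyp by lra.
  replace (logit (/ 2)) with 0 by (unfold logit; replace ((1 - / 2) / / 2) with 1 by field;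
    rewrite ln_1; field).
  apply Chyp_0.
Qed.

Lemma Gbin_sym rho q : Gbin rho (1 - q) = Gbin rho q.
Proof. unfold Gbin. replace (1 - (1 - q)) with q by ring. rewrite Rplus_comm. reflexivity. Qed.

Lemma Cbin_sym q : Cbin (1 - q) = Cbin q.
Proof. unfold Cbin, hb. replace (1 - (1 - q)) with q by ring. ring. Qed.

Lemma reduce_to_half (P : R -> Prop) : (forall q, P (1 - q) -> P q) ->
  (forall q, 0 <= q <= / 2 -> P q) -> forall q, 0 <= q <= 1 -> P q.
Proof.
  intros hsym hhalf q hq. destruct (Rle_dec q (/ 2)); [apply hhalf; lra|].
  apply hsym, hhalf. lra.
Qed.

Lemma Cbin_continuity q : continuity_pt Cbin q.
Proof.
  unfold Cbin, hb.
  apply (continuity_pt_minus (fun _ => 1)); [apply continuity_pt_const; intros u v; reflexivity|].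
  apply (continuity_pt_minus (fun p => - xlog2 p) (fun p => xlog2 (1 - p))).
  - apply (continuity_pt_opp xlog2), xlog2_continuity.
  - apply (continuity_pt_comp (fun p => 1 - p) xlog2); [|apply xlog2_continuity].
    apply (derive_continuity _ (-1)). auto_derive; auto; ring.
Qed.

Lemma Gbin_continuity rho p : -1 < rho -> continuity_pt (Gbin rho) p.
Proof.
  intro hr. set (s := / (1 + rho)). assert (hs : 0 < s) by (apply Rinv_0_lt_compat; lra).
  set (S := fun p => rpow p s + rpow (1 - p) s).
  assert (hS : 0 < S p).
  { unfold S. pose proof (rpow_nonneg p s). pose proof (rpow_nonneg (1 - p) s).
    destruct (Rlt_le_dec 0 p); [pose proof (rpow_gt0 p s r) | pose proof (rpow_gt0 (1 - p) s)]; lra. }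
  apply (continuity_pt_mult (fun _ => Rpower 2 (- rho)) (fun p => Rpower (S p) (1 + rho))).
  { apply continuity_pt_const; intros u v; reflexivity. }
  apply (continuity_pt_comp S (fun u => Rpower u (1 + rho))).
  - apply (continuity_pt_plus (fun p => rpow p s) (fun p => rpow (1 - p) s)); [apply rpow_continuity; auto|].
    apply (continuity_pt_comp (fun p => 1 - p) (fun p => rpow p s)); [|apply rpow_continuity; auto].
    apply (derive_continuity _ (-1)). auto_derive; auto; ring.
  - apply (derive_continuity _ ((1 + rho) * / S p * Rpower (S p) (1 + rho))).
    unfold Rpower. auto_derive; auto. ring.
Qed.

Lemma Cbin_strict q1 q2 : 0 <= q1 < q2 -> q2 <= / 2 -> Cbin q2 < Cbin q1.
Proof.
  intros h1 h2. destruct (Req_dec q1 0) as [->|n].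
  - rewrite Cbin_0. unfold Cbin, hb.
    pose proof (xlog2_neg q2 ltac:(lra)). pose proof (xlog2_neg (1 - q2) ltac:(lra)). lra.
  - rewrite !Cbin_Chyp by lra. apply Chyp_strict. split.
    + destruct (logit_spec q2) as [a _]; lra.
    + apply logit_strict_anti; lra.
Qed.

Lemma Cbin_anti q1 q2 : 0 <= q1 <= q2 -> q2 <= / 2 -> Cbin q2 <= Cbin q1.
Proof.
  intros h1 h2. destruct (Req_dec q1 q2) as [->|ne]; [lra|].
  left. apply Cbin_strict; lra.
Qed.

Lemma Cbin_range q : 0 <= q <= 1 -> 0 <= Cbin q <= 1.
Proof.
  revert q. apply (reduce_to_half (fun q => 0 <= Cbin q <= 1)); [intro; rewrite Cbin_sym; auto|].
  intros q hq. destruct (Req_dec q (/ 2)) as [->|ne]; [rewrite Cbin_half; lra|].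
  destruct (Req_dec q 0) as [->|n0]; [rewrite Cbin_0; lra|].
  pose proof (Cbin_strict q (/ 2) ltac:(lra) ltac:(lra)). pose proof (Cbin_strict 0 q ltac:(lra) ltac:(lra)).
  rewrite Cbin_half in *. rewrite Cbin_0 in *. lra.
Qed.

Lemma Cbin_eq_0 q : 0 <= q <= 1 -> Cbin q = 0 -> q = / 2.
Proof.
  revert q. apply (reduce_to_half (fun q => Cbin q = 0 -> q = / 2)).
  - intros q h e. rewrite <- Cbin_sym in e. specialize (h e). lra.
  - intros q hq e. destruct (Req_dec q (/ 2)) as [|ne]; auto.
    pose proof (Cbin_strict q (/ 2) ltac:(lra) ltac:(lra)). rewrite Cbin_half in *. lra.
Qed.

Lemma Cbin_eq_1 q : 0 <= q <= 1 -> Cbin q = 1 -> q = 0 \/ q = 1.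
Proof.
  intros h e. destruct (Req_dec q 0); auto. destruct (Req_dec q 1); auto. exfalso.
  unfold Cbin, hb in e. pose proof (xlog2_neg q ltac:(lra)). pose proof (xlog2_neg (1 - q) ltac:(lra)).
  lra.
Qed.

Lemma Gbin_strict rho q1 q2 : -1 < rho -> 0 <= q1 < q2 -> q2 <= / 2 ->
  (0 < rho -> Gbin rho q1 < Gbin rho q2) /\ (rho < 0 -> Gbin rho q2 < Gbin rho q1).
Proof.
  intros hr h1 h2.
  assert (interior : forall u v, 0 < u < v -> v <= / 2 ->
            (0 < rho -> Gbin rho u < Gbin rho v) /\ (rho < 0 -> Gbin rho v < Gbin rho u)).
  { intros u v hu hv. rewrite !Gbin_Ghyp by (auto; lra).
    destruct (logit_spec v) as [a _]; [lra|].
    pose proof (logit_strict_anti u v hu hv).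
    destruct (Ghyp_strict rho (logit v) (logit u) hr ltac:(lra)) as [g1 g2]. auto. }
  destruct (Req_dec q1 0) as [->|n]; [|apply interior; lra].
  split; intro hs.
  - apply (strict_incr_left_end (Gbin rho) 0 (/ 2)); [apply Gbin_continuity; auto | | lra].
    intros u v huv hv. apply (interior u v huv hv), hs.
  - enough (- Gbin rho 0 < - Gbin rho q2) by lra.
    apply (strict_incr_left_end (fun q => - Gbin rho q) 0 (/ 2)); [| | lra].
    + apply (continuity_pt_opp (Gbin rho)), Gbin_continuity; auto.
    + intros u v huv hv. destruct (interior u v huv hv) as [_ g]. specialize (g hs). lra.
Qed.

Lemma Gbin_monotone rho q1 q2 : -1 < rho -> 0 <= q1 <= q2 -> q2 <= / 2 ->
  (0 < rho -> Gbin rho q1 <= Gbin rho q2) /\ (rho < 0 -> Gbin rho q2 <= Gbin rho q1).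
Proof.
  intros hr h1 h2. destruct (Req_dec q1 q2) as [->|ne]; [split; intro; lra|].
  destruct (Gbin_strict rho q1 q2 hr ltac:(lra) h2) as [g1 g2].
  split; intro hs; [specialize (g1 hs) | specialize (g2 hs)]; lra.
Qed.

Lemma Gbin_range rho p : -1 < rho -> rho <> 0 -> 0 <= p <= / 2 ->
  Rmin 1 (Rpower 2 (- rho)) <= Gbin rho p <= Rmax 1 (Rpower 2 (- rho)).
Proof.
  intros hr hr0 hp. rewrite <- (Gbin_half rho), <- Gbin_0 by auto.
  destruct (Gbin_monotone rho 0 p hr ltac:(lra) ltac:(lra)) as [a1 a2].
  destruct (Gbin_monotone rho p (/ 2) hr ltac:(lra) ltac:(lra)) as [b1 b2].
  pose proof (Rmin_l (Gbin rho (/ 2)) (Gbin rho 0)). pose proof (Rmin_r (Gbin rho (/ 2)) (Gbin rho 0)).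
  pose proof (Rmax_l (Gbin rho (/ 2)) (Gbin rho 0)). pose proof (Rmax_r (Gbin rho (/ 2)) (Gbin rho 0)).
  destruct (Rtotal_order rho 0) as [hn|[e|hpos]]; [specialize (a2 hn); specialize (b2 hn) | lra |
    specialize (a1 hpos); specialize (b1 hpos)]; lra.
Qed.

Lemma logit_anti q1 q2 : 0 < q1 <= q2 -> q2 <= / 2 -> logit q2 <= logit q1.
Proof.
  intros h1 h2. destruct (Req_dec q1 q2) as [->|ne]; [lra|].
  left. apply logit_strict_anti; lra.
Qed.

Lemma Gbin_minus_linear_continuity rho k q : -1 < rho ->
  continuity_pt (fun q => Gbin rho q - k * Cbin q) q.
Proof.
  intro hr. apply (continuity_pt_minus (Gbin rho) (fun q => k * Cbin q)); [apply Gbin_continuity; auto|].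
  apply (continuity_pt_scal Cbin), Cbin_continuity.
Qed.

Lemma Gbin_tangent rho p0 : -1 < rho -> 0 < p0 < / 2 ->
  exists lam, forall q, 0 <= q <= 1 -> Gbin rho q <= Gbin rho p0 + lam * (Cbin q - Cbin p0).
Proof.
  intros hr hp. set (lam := ln 2 * slope rho (logit p0)). exists lam.
  destruct (logit_spec p0) as [_ e0]; [lra|].
  assert (hx0 : 0 < logit p0).
  { destruct (logit_spec (/ 2)) as [a _]; [lra|]. pose proof (logit_strict_anti p0 (/ 2)). lra. }
  set (f := fun q => Gbin rho q - lam * Cbin q).
  assert (interior : forall q, 0 < q <= / 2 -> f q <= f p0).
  { intros q hq. unfold f. rewrite !Gbin_Ghyp, !Cbin_Chyp by (auto; lra).
    destruct (logit_spec q hq) as [a _].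
    pose proof (Ghyp_tangent rho (logit p0) (logit q) hr hx0 a). unfold lam. lra. }
  enough (forall q, 0 <= q <= 1 -> f q <= f p0) by (intros q hq; specialize (H q hq); unfold f in H; lra).
  apply reduce_to_half; [intro q; unfold f; rewrite Gbin_sym, Cbin_sym; auto|].
  intros q hq. destruct (Req_dec q 0) as [->|]; [|apply interior; lra].
  apply (bound_at_left_end f 0 _ (/ 2)); [apply Gbin_minus_linear_continuity; auto | lra |].
  intros t ht. apply interior. lra.
Qed.

Lemma Gbin_chord rho q : -1 < rho -> 0 <= q <= 1 ->
  1 + (Rpower 2 (- rho) - 1) * Cbin q <= Gbin rho q.
Proof.
  intros hr. revert q. set (k := Rpower 2 (- rho) - 1).
  set (f := fun q => Gbin rho q - k * Cbin q).
  assert (hf0 : f 0 = 1) by (unfold f, k; rewrite Gbin_0, Cbin_0; ring).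
  enough (forall q, 0 <= q <= 1 -> 1 <= f q) by (intros q hq; specialize (H q hq); unfold f in H; lra).
  apply reduce_to_half; [intro q; unfold f; rewrite Gbin_sym, Cbin_sym; auto|].
  intros r hr'. destruct (Req_dec r 0) as [->|r0]; [lra|].
  destruct (logit_spec r ltac:(lra)) as [a _].
  assert (along : forall q, 0 < q <= / 2 -> f q = Ghyp rho (logit q) - k * Chyp (logit q))
    by (intros q hq; unfold f; rewrite Gbin_Ghyp, Cbin_Chyp; auto).
  destruct (Ghyp_minus_linear_unimodal rho k (logit r) hr a) as [rises|falls].
  - rewrite Ghyp_0, Chyp_0 in rises. rewrite along by lra. lra.
  - rewrite <- hf0. apply (bound_at_left_end f 0 _ r);
      [apply Gbin_minus_linear_continuity; auto | lra |].
    intros q hq. rewrite !along by lra. apply falls, logit_anti; lra.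
Qed.

Lemma hinv_spec v : 0 <= v <= 1 -> 0 <= hinv v <= / 2 /\ hb (hinv v) = v.
Proof.
  intro hv. unfold hinv. apply epsilon_spec.
  destruct (IVT_gen Cbin 0 (/ 2) (1 - v) Cbin_continuity) as [p [hp e]].
  - rewrite Cbin_0, Cbin_half, Rmin_right, Rmax_left by lra. lra.
  - rewrite Rmin_left, Rmax_right in hp by lra. exists p. unfold Cbin in e. split; [auto | lra].
Qed.

Lemma bsc_crossover_spec C : 0 <= C <= 1 -> 0 <= hinv (1 - C) <= / 2 /\ Cbin (hinv (1 - C)) = C.
Proof.
  intro h. destruct (hinv_spec (1 - C)) as [a b]; [lra|]. split; auto. unfold Cbin. lra.
Qed.

Lemma hinv_Cbin p : 0 <= p <= / 2 -> hinv (1 - Cbin p) = p.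
Proof.
  intro hp. destruct (bsc_crossover_spec (Cbin p)) as [a b]; [apply Cbin_range; lra|].
  set (p' := hinv (1 - Cbin p)) in *.
  destruct (Rtotal_order p' p) as [l|[e|g]]; auto.
  - pose proof (Cbin_strict p' p ltac:(lra) ltac:(lra)). lra.
  - pose proof (Cbin_strict p p' ltac:(lra) ltac:(lra)). lra.
Qed.

Lemma Fbsc_Gbin rho C : Fbsc rho C = Gbin rho (hinv (1 - C)).
Proof. reflexivity. Qed.

(** * Decomposition of F(rho) and of the capacity into columns

   Both quantities are sums over output letters y of a contribution of the column
   (W(y|x0), W(y|x1)) only, namely mass * Gbin (cross) and mass * Cbin (cross). *)

Definition Fterm (rho w A : R) : R :=
  if Rlt_dec 0 w then w * Rpower (A / Rpower w (/ (1 + rho))) rho else 0.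
Definition Cterm (w M : R) : R := if Rlt_dec 0 w then w * log2 (w / M) else 0.

Definition mass (W : bool -> nat -> R) (y : nat) : R := (W false y + W true y) / 2.
Definition cross (W : bool -> nat -> R) (y : nat) : R := W false y / (W false y + W true y).

Lemma avg2_sumR n (g : bool -> nat -> R) :
  avg2 (fun x => sumR n (g x)) = sumR n (fun y => avg2 (fun x => g x y)).
Proof. unfold avg2. rewrite <- !sumR_scal, <- sumR_plus. reflexivity. Qed.

Lemma Fterm_pow rho w A : -1 < rho -> 0 <= w -> 0 < A ->
  Fterm rho w A = rpow w (/ (1 + rho)) * Rpower A rho.
Proof.
  intros hr hw hA. unfold Fterm. destruct (Rlt_dec 0 w) as [h|h].
  - rewrite rpow_exp by auto. unfold Rpower.
    unfold Rdiv. rewrite ln_mult, ln_Rinv, ln_exp by (try apply Rinv_0_lt_compat; apply exp_pos || auto).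
    rewrite <- (exp_ln w) at 1 by auto. rewrite <- !exp_plus. f_equal. field. lra.
  - replace w with 0 by lra. rewrite rpow_0. ring.
Qed.

Lemma column_F rho a b : -1 < rho -> 0 <= a -> 0 <= b -> 0 < a + b ->
  avg2 (fun x => Fterm rho (if x then b else a) (avg2 (fun x' => rpow (if x' then b else a) (/ (1 + rho)))))
  = (a + b) / 2 * Gbin rho (a / (a + b)).
Proof.
  intros hr ha hb' hab. unfold avg2. set (t := a + b). assert (ht : 0 < t) by (unfold t; lra).
  set (p := a / t).
  assert (ea : a = t * p) by (unfold p; field; lra).
  assert (eb : b = t * (1 - p)) by (unfold p, t; field; lra).
  assert (hp : 0 <= p <= 1) by (unfold p; split;
    [apply Rdiv_le_0_compat; lra | apply (Rmult_le_reg_r t); [lra | field_simplify; unfold t; lra]]).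
  set (s := / (1 + rho)).
  set (S := rpow p s + rpow (1 - p) s).
  assert (hS : 0 < S).
  { unfold S. pose proof (rpow_nonneg p s). pose proof (rpow_nonneg (1 - p) s).
    destruct (Rlt_le_dec 0 p); [pose proof (rpow_gt0 p s r) | pose proof (rpow_gt0 (1 - p) s)]; lra. }
  set (A := / 2 * rpow a s + / 2 * rpow b s).
  assert (eA : A = / 2 * Rpower t s * S) by (unfold A, S; rewrite ea, eb, !rpow_mult by lra; ring).
  assert (hts : 0 < Rpower t s) by apply exp_pos.
  assert (hA : 0 < A) by (rewrite eA; nra).
  rewrite !Fterm_pow by (auto; lra). fold s A.
  replace (/ 2 * (rpow a s * Rpower A rho) + / 2 * (rpow b s * Rpower A rho)) with (A * Rpower A rho)
    by (unfold A; ring).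
  unfold Gbin. fold s S. rewrite eA. unfold Rpower in *.
  rewrite !ln_mult, ln_exp, ln_Rinv by (try apply Rmult_lt_0_compat; try apply Rinv_0_lt_compat; lra).
  replace (/ 2 * exp (s * ln t) * S) with (exp (- ln 2 + s * ln t + ln S))
    by (rewrite !exp_plus, exp_Ropp, !exp_ln; auto; lra).
  replace (t / 2) with (exp (ln t + - ln 2)) by (rewrite exp_plus, exp_Ropp, !exp_ln; auto; lra).
  rewrite <- !exp_plus. f_equal. unfold s. field. lra.
Qed.

Lemma Cterm_split t q : 0 < t -> 0 <= q -> Cterm (t * q) (t / 2) = t * (xlog2 q + q).
Proof.
  intros ht hq. unfold Cterm. pose proof ln2_pos.
  destruct (Rlt_dec 0 (t * q)) as [h|h].
  - assert (0 < q) by nra. rewrite xlog2_pos by auto. unfold log2.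
    replace (t * q / (t / 2)) with (2 * q) by (field; lra).
    rewrite ln_mult by lra. field. lra.
  - replace q with 0 by nra. rewrite xlog2_0. ring.
Qed.

Lemma column_C a b : 0 <= a -> 0 <= b -> 0 < a + b ->
  avg2 (fun x => Cterm (if x then b else a) (avg2 (fun x' => if x' then b else a)))
  = (a + b) / 2 * Cbin (a / (a + b)).
Proof.
  intros ha hb' hab. unfold avg2. set (t := a + b). assert (ht : 0 < t) by (unfold t; lra).
  set (p := a / t).
  assert (ea : a = t * p) by (unfold p; field; lra).
  assert (eb : b = t * (1 - p)) by (unfold p, t; field; lra).
  assert (hp : 0 <= p <= 1) by (unfold p; split;
    [apply Rdiv_le_0_compat; lra | apply (Rmult_le_reg_r t); [lra | field_simplify; unfold t; lra]]).
  replace (/ 2 * a + / 2 * b) with (t / 2) by (unfold t; field).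
  rewrite ea at 1. rewrite eb at 1. rewrite !Cterm_split by lra.
  unfold Cbin, hb. clearbody t p. field.
Qed.

Lemma column_cases (W : bool -> nat -> R) y : 0 <= W false y -> 0 <= W true y ->
  (W false y = 0 /\ W true y = 0) \/ (0 < mass W y /\ 0 <= cross W y <= 1).
Proof.
  intros ha hb'. unfold mass, cross.
  destruct (Req_dec (W false y + W true y) 0) as [e|ne]; [left; lra|]. right. split; [lra|].
  split; [apply Rdiv_le_0_compat; lra|].
  apply (Rmult_le_reg_r (W false y + W true y)); [lra | field_simplify; lra].
Qed.

Lemma gallagerF_columns rho n W : -1 < rho -> is_channel n W ->
  gallagerF rho n W = sumR n (fun y => mass W y * Gbin rho (cross W y)).
Proof.
  intros hr [hnn _]. unfold gallagerF. rewrite avg2_sumR. apply sumR_ext. intros y _.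
  destruct (column_cases W y (hnn _ _) (hnn _ _)) as [[e1 e2]|[hm _]].
  - unfold mass, avg2. rewrite e1, e2. destruct (Rlt_dec 0 0); lra.
  - unfold mass, cross in *. rewrite <- column_F by (auto; lra).
    unfold avg2. reflexivity.
Qed.

Lemma capacity_columns n W : is_channel n W ->
  capacity n W = sumR n (fun y => mass W y * Cbin (cross W y)).
Proof.
  intros [hnn _]. unfold capacity. rewrite avg2_sumR. apply sumR_ext. intros y _.
  destruct (column_cases W y (hnn _ _) (hnn _ _)) as [[e1 e2]|[hm _]].
  - unfold mass, avg2. rewrite e1, e2. destruct (Rlt_dec 0 0); lra.
  - unfold mass, cross in *. rewrite <- column_C by (auto; lra).
    unfold avg2. reflexivity.
Qed.

Lemma total_mass n W : is_channel n W -> sumR n (mass W) = 1.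
Proof.
  intros [_ hs]. unfold mass, Rdiv.
  transitivity (sumR n (fun y => / 2 * W false y + / 2 * W true y)).
  - apply sumR_ext. intros; ring.
  - rewrite sumR_plus, !sumR_scal, !hs. field.
Qed.

(** * Part (i): the BEC and BSC bounds *)

Lemma average_affine n W al be : is_channel n W ->
  sumR n (fun y => mass W y * (al + be * Cbin (cross W y))) = al + be * capacity n W.
Proof.
  intro hc. rewrite capacity_columns by auto.
  transitivity (al * sumR n (mass W) + be * sumR n (fun y => mass W y * Cbin (cross W y))).
  - rewrite <- !sumR_scal, <- sumR_plus. apply sumR_ext. intros; ring.
  - rewrite total_mass by auto. ring.
Qed.

Lemma gallagerF_le_affine rho n W (P : R -> Prop) al be : -1 < rho -> is_channel n W ->
  (forall y, (y < n)%nat -> 0 < mass W y -> P (cross W y)) ->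
  (forall q, 0 <= q <= 1 -> P q -> Gbin rho q <= al + be * Cbin q) ->
  gallagerF rho n W <= al + be * capacity n W.
Proof.
  intros hr hc hP hb. rewrite gallagerF_columns, <- average_affine by auto.
  apply sumR_le. intros y hy. destruct hc as [hnn hs].
  destruct (column_cases W y (hnn _ _) (hnn _ _)) as [[e1 e2]|[hm hq]].
  - unfold mass. rewrite e1, e2. lra.
  - apply Rmult_le_compat_l; [lra|]. apply hb, hP; auto.
Qed.

Lemma gallagerF_ge_affine rho n W al be : -1 < rho -> is_channel n W ->
  (forall q, 0 <= q <= 1 -> al + be * Cbin q <= Gbin rho q) ->
  al + be * capacity n W <= gallagerF rho n W.
Proof.
  intros hr hc hb. rewrite gallagerF_columns, <- average_affine by auto.
  apply sumR_le. intros y hy. pose proof hc as [hnn _].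
  destruct (column_cases W y (hnn _ _) (hnn _ _)) as [[e1 e2]|[hm hq]].
  - unfold mass. rewrite e1, e2. lra.
  - apply Rmult_le_compat_l; auto. lra.
Qed.

Lemma capacity_range n W : is_channel n W -> 0 <= capacity n W <= 1.
Proof.
  intro hc. pose proof hc as [hnn _].
  assert (col : forall y, 0 <= mass W y * Cbin (cross W y) <= mass W y).
  { intro y. destruct (column_cases W y (hnn _ _) (hnn _ _)) as [[e1 e2]|[hm hq]].
    - unfold mass. rewrite e1, e2. lra.
    - pose proof (Cbin_range _ hq). nra. }
  rewrite capacity_columns by auto. split.
  - apply sumR_nonneg. intros y _. apply col.
  - rewrite <- (total_mass n W hc). apply sumR_le. intros y _. apply col.
Qed.

Lemma capacity_0_columns n W : is_channel n W -> capacity n W = 0 ->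
  forall y, (y < n)%nat -> 0 < mass W y -> Cbin (cross W y) = 0.
Proof.
  intros hc e y hy hm. pose proof hc as [hnn _].
  assert (col : forall y, 0 <= mass W y * Cbin (cross W y)).
  { intro z. destruct (column_cases W z (hnn _ _) (hnn _ _)) as [[e1 e2]|[hm' hq]].
    - unfold mass. rewrite e1, e2. lra.
    - pose proof (Cbin_range _ hq). nra. }
  assert (mass W y * Cbin (cross W y) = 0); [|nra].
  symmetry. apply (sumR_le_eq n (fun _ => 0) (fun y => mass W y * Cbin (cross W y))); auto.
  rewrite <- capacity_columns, sumR_zero by auto. auto.
Qed.

Lemma capacity_1_columns n W : is_channel n W -> capacity n W = 1 ->
  forall y, (y < n)%nat -> 0 < mass W y -> Cbin (cross W y) = 1.
Proof.
  intros hc e y hy hm. pose proof hc as [hnn _].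
  assert (col : forall y, mass W y * Cbin (cross W y) <= mass W y).
  { intro z. destruct (column_cases W z (hnn _ _) (hnn _ _)) as [[e1 e2]|[hm' hq]].
    - unfold mass. rewrite e1, e2. lra.
    - pose proof (Cbin_range _ hq). nra. }
  assert (mass W y * Cbin (cross W y) = mass W y); [|nra].
  apply (sumR_le_eq n (fun y => mass W y * Cbin (cross W y)) (mass W)); auto.
  rewrite <- capacity_columns, total_mass by auto. exact e.
Qed.

Theorem gallagerF_ge_Fbec rho n W : -1 < rho -> is_channel n W ->
  Fbec rho (capacity n W) <= gallagerF rho n W.
Proof.
  intros hr hc. apply gallagerF_ge_affine; auto. intros q hq. apply Gbin_chord; auto.
Qed.

Theorem gallagerF_le_Fbsc rho n W : -1 < rho -> is_channel n W ->
  gallagerF rho n W <= Fbsc rho (capacity n W).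
Proof.
  intros hr hc. pose proof (capacity_range n W hc) as hC.
  destruct (bsc_crossover_spec _ hC) as [hp0 hcp0]. rewrite Fbsc_Gbin.
  set (C := capacity n W) in *. set (p0 := hinv (1 - C)) in *.
  destruct (Req_dec C 0) as [e0|n0]; [|destruct (Req_dec C 1) as [e1|n1]].
  -
    replace (Gbin rho p0) with (1 + 0 * C) by (rewrite (Cbin_eq_0 p0), Gbin_half; auto; lra).
    apply (gallagerF_le_affine rho n W (fun q => Cbin q = 0)); auto.
    + intros y hy hm. apply (capacity_0_columns n W); auto.
    + intros q hq e. rewrite (Cbin_eq_0 q hq e), Gbin_half by auto. lra.
  -
    assert (hz : p0 = 0) by (destruct (Cbin_eq_1 p0) as [|h]; auto; lra).
    replace (Gbin rho p0) with (Gbin rho 0 + 0 * C) by (rewrite hz; ring).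
    apply (gallagerF_le_affine rho n W (fun q => Cbin q = 1)); auto.
    + intros y hy hm. apply (capacity_1_columns n W); auto.
    + intros q hq e. destruct (Cbin_eq_1 q hq e) as [->| ->]; [lra|].
      rewrite <- Gbin_sym. replace (1 - 1) with 0 by ring. lra.
  - (* interior point of the curve: use the tangent there *)
    assert (p0 <> 0) by (intro e; rewrite e, Cbin_0 in hcp0; lra).
    assert (p0 <> / 2) by (intro e; rewrite e, Cbin_half in hcp0; lra).
    destruct (Gbin_tangent rho p0 hr ltac:(lra)) as [lam hlam].
    replace (Gbin rho p0) with ((Gbin rho p0 - lam * C) + lam * C) by ring.
    apply (gallagerF_le_affine rho n W (fun _ => True)); auto.
    intros q hq _. specialize (hlam q hq). rewrite hcp0 in hlam. nra.
Qed.

(** * Parts (ii) and (iii): inverting the bounds *)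

Lemma pow2_opp_sign rho : (0 < rho -> Rpower 2 (- rho) < 1) /\ (rho < 0 -> 1 < Rpower 2 (- rho)).
Proof.
  split; intro h.
  - rewrite <- (Rpower_O 2) by lra. apply Rpower_lt; lra.
  - rewrite <- (Rpower_O 2) at 1 by lra. apply Rpower_lt; lra.
Qed.

Lemma Fbec_strict rho C1 C2 : C1 < C2 ->
  (0 < rho -> Fbec rho C2 < Fbec rho C1) /\ (rho < 0 -> Fbec rho C1 < Fbec rho C2).
Proof.
  intro h. unfold Fbec. destruct (pow2_opp_sign rho) as [k1 k2].
  split; intro hs; [specialize (k1 hs) | specialize (k2 hs)]; nra.
Qed.

Lemma Fbsc_strict rho C1 C2 : -1 < rho -> 0 <= C1 < C2 -> C2 <= 1 ->
  (0 < rho -> Fbsc rho C2 < Fbsc rho C1) /\ (rho < 0 -> Fbsc rho C1 < Fbsc rho C2).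
Proof.
  intros hr h1 h2. rewrite !Fbsc_Gbin.
  destruct (bsc_crossover_spec C1) as [a1 e1]; [lra|].
  destruct (bsc_crossover_spec C2) as [a2 e2]; [lra|].
  set (p1 := hinv (1 - C1)) in *. set (p2 := hinv (1 - C2)) in *.
  assert (p2 < p1).
  { destruct (Rlt_le_dec p2 p1) as [|hle]; auto. exfalso.
    destruct (Req_dec p1 p2) as [e|ne]; [rewrite e in e1; lra|].
    pose proof (Cbin_strict p1 p2 ltac:(lra) ltac:(lra)). lra. }
  apply Gbin_strict; auto; lra.
Qed.

Lemma strict_incr_reflects_le (g : R -> R) u v :
  (forall a b, 0 <= a < b -> b <= 1 -> g a < g b) ->
  0 <= u <= 1 -> 0 <= v <= 1 -> g u <= g v -> u <= v.
Proof.
  intros hg hu hv h. destruct (Rle_dec u v) as [|n]; auto.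
  pose proof (hg v u ltac:(lra) ltac:(lra)). lra.
Qed.

Lemma Fbec_between rho C : 0 <= C <= 1 ->
  Rmin 1 (Rpower 2 (- rho)) <= Fbec rho C <= Rmax 1 (Rpower 2 (- rho)).
Proof. intro h. unfold Fbec, Rmin, Rmax. destruct Rle_dec; split; nra. Qed.

Lemma Cbec_spec rho t : Rmin 1 (Rpower 2 (- rho)) <= t <= Rmax 1 (Rpower 2 (- rho)) ->
  0 <= Cbec rho t <= 1 /\ Fbec rho (Cbec rho t) = t.
Proof.
  intro ht. unfold Cbec. apply epsilon_spec.
  destruct (IVT_gen (Fbec rho) 0 1 t) as [c [hc e]].
  - intro c. apply (derive_continuity _ (Rpower 2 (- rho) - 1)). unfold Fbec. auto_derive; auto; ring.
  - unfold Fbec. rewrite !Rmult_0_r, Rmult_1_r, Rplus_0_r. replace (1 + (Rpower 2 (- rho) - 1))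
      with (Rpower 2 (- rho)) by ring. auto.
  - rewrite Rmin_left, Rmax_right in hc by lra. exists c. auto.
Qed.

Lemma Cbsc_spec rho t : -1 < rho ->
  Rmin 1 (Rpower 2 (- rho)) <= t <= Rmax 1 (Rpower 2 (- rho)) ->
  0 <= Cbsc rho t <= 1 /\ Fbsc rho (Cbsc rho t) = t.
Proof.
  intros hr ht. unfold Cbsc. apply epsilon_spec.
  destruct (IVT_gen (Gbin rho) (/ 2) 0 t) as [p [hp e]].
  - intro p. apply Gbin_continuity; auto.
  - rewrite Gbin_half, Gbin_0 by auto. auto.
  - rewrite Rmin_right, Rmax_left in hp by lra.
    exists (Cbin p). split; [apply Cbin_range; lra|].
    rewrite Fbsc_Gbin, hinv_Cbin by lra. auto.
Qed.

Theorem capacity_between_inverses rho n W : -1 < rho -> is_channel n W ->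
  (rho < 0 -> Cbsc rho (gallagerF rho n W) <= capacity n W <= Cbec rho (gallagerF rho n W)) /\
  (0 < rho -> Cbec rho (gallagerF rho n W) <= capacity n W <= Cbsc rho (gallagerF rho n W)).
Proof.
  intros hr hc.
  pose proof (capacity_range n W hc) as hC.
  pose proof (gallagerF_ge_Fbec rho n W hr hc) as hlo.
  pose proof (gallagerF_le_Fbsc rho n W hr hc) as hup.
  set (C := capacity n W) in *. set (F := gallagerF rho n W) in *.
  assert (hF : rho <> 0 -> Rmin 1 (Rpower 2 (- rho)) <= F <= Rmax 1 (Rpower 2 (- rho))).
  { intro r0. pose proof (Fbec_between rho C hC) as hbec.
    destruct (bsc_crossover_spec C hC) as [hp _].
    pose proof (Gbin_range rho _ hr r0 hp) as hbsc. rewrite <- Fbsc_Gbin in hbsc. lra. }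
  split; intro hs;
    (destruct (Cbec_spec rho F (hF ltac:(lra))) as [b1 b2];
     destruct (Cbsc_spec rho F hr (hF ltac:(lra))) as [c1 c2]); split.
  - apply (strict_incr_reflects_le (Fbsc rho)); auto; [|lra].
    intros a b hab hb. apply Fbsc_strict; auto.
  - apply (strict_incr_reflects_le (Fbec rho)); auto; [|lra].
    intros a b hab hb. apply Fbec_strict; auto; lra.
  - apply (strict_incr_reflects_le (fun c => - Fbec rho c)); auto; [|lra].
    intros a b hab hb. pose proof (proj1 (Fbec_strict rho a b ltac:(lra)) hs). lra.
  - apply (strict_incr_reflects_le (fun c => - Fbsc rho c)); auto; [|lra].
    intros a b hab hb. pose proof (proj1 (Fbsc_strict rho a b hr hab hb) hs). lra.
Qed.

(** * Extremal channels and achievability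

   [mixture w q] sends its input through a BSC with crossover q with probability w
   and erases it (output 2) otherwise.  The BEC of capacity C is [mixture C 0]. *)

Definition mixture (w q : R) (x : bool) (y : nat) : R :=
  match y with
  | 0%nat => if x then w * q else w * (1 - q)
  | 1%nat => if x then w * (1 - q) else w * q
  | 2%nat => 1 - w
  | _ => 0
  end.

Lemma sumR_2 f : sumR 2 f = f 0%nat + f 1%nat.
Proof. unfold sumR. simpl. ring. Qed.

Lemma sumR_3 f : sumR 3 f = f 0%nat + f 1%nat + f 2%nat.
Proof. unfold sumR. simpl. ring. Qed.

Lemma scaled_column W y (f : R -> R) w q : 0 <= w ->
  W false y = w * q -> W true y = w * (1 - q) -> mass W y * f (cross W y) = w / 2 * f q.
Proof.
  intros hw e1 e2. unfold mass, cross. rewrite e1, e2.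
  replace (w * q + w * (1 - q)) with w by ring.
  destruct (Req_dec w 0) as [->|ne]; [lra|].
  replace (w * q / w) with q by (field; auto). reflexivity.
Qed.

Lemma mixture_is_bims w q : 0 <= w <= 1 -> 0 <= q <= 1 -> is_bims 3 (mixture w q).
Proof.
  intros hw hq. split; [split|].
  - intros x y. destruct x, y as [|[|[|y]]]; simpl; nra.
  - intro x. rewrite sumR_3. destruct x; simpl; ring.
  - exists (fun y => if Nat.eqb y 2 then 1%nat else 0%nat). split.
    + intros [|[|k]]; unfold block; simpl; [apply perm_swap | apply Permutation_refl ..].
    + intros y y' hy hy' hp.
      destruct y as [|[|[|y]]]; try lia; destruct y' as [|[|[|y']]]; try lia; simpl in *;
        try discriminate; first [left; split; reflexivity | right; split; reflexivity].
Qed.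

Lemma mixture_columns (f : R -> R) w q : 0 <= w <= 1 -> (forall q, f (1 - q) = f q) ->
  sumR 3 (fun y => mass (mixture w q) y * f (cross (mixture w q) y)) = w * f q + (1 - w) * f (/ 2).
Proof.
  intros hw hsym. rewrite sumR_3.
  rewrite (scaled_column _ 0%nat f w (1 - q)), (scaled_column _ 1%nat f w q),
    (scaled_column _ 2%nat f (2 * (1 - w)) (/ 2)), hsym by (simpl; lra || ring).
  field.
Qed.

Lemma mixture_capacity w q : 0 <= w <= 1 -> 0 <= q <= 1 -> capacity 3 (mixture w q) = w * Cbin q.
Proof.
  intros hw hq. rewrite capacity_columns by (apply mixture_is_bims; auto).
  rewrite mixture_columns, Cbin_half by (auto; apply Cbin_sym). ring.
Qed.

Lemma mixture_gallagerF rho w q : -1 < rho -> 0 <= w <= 1 -> 0 <= q <= 1 ->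
  gallagerF rho 3 (mixture w q) = w * Gbin rho q + (1 - w).
Proof.
  intros hr hw hq. rewrite gallagerF_columns by (auto; apply mixture_is_bims; auto).
  rewrite mixture_columns, Gbin_half by (auto; apply Gbin_sym). ring.
Qed.

Theorem bec_extremal rho C : -1 < rho -> 0 <= C <= 1 ->
  is_bims 3 (bec C) /\ capacity 3 (bec C) = C /\ gallagerF rho 3 (bec C) = Fbec rho C.
Proof.
  intros hr hC.
  replace (bec C) with (mixture C 0) by (extensionality x; extensionality y;
    destruct x, y as [|[|[|y]]]; simpl; ring).
  split; [|split].
  - apply mixture_is_bims; lra.
  - rewrite mixture_capacity, Cbin_0 by lra. ring.
  - rewrite mixture_gallagerF, Gbin_0 by lra. unfold Fbec. ring.
Qed.

Theorem bsc_extremal rho C : -1 < rho -> 0 <= C <= 1 ->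
  is_bims 2 (bsc C) /\ capacity 2 (bsc C) = C /\ gallagerF rho 2 (bsc C) = Fbsc rho C.
Proof.
  intros hr hC. destruct (bsc_crossover_spec C hC) as [he hce].
  set (e := hinv (1 - C)) in *.
  assert (hch : is_channel 2 (bsc C)).
  { split.
    - intros x [|[|y]]; destruct x; unfold bsc; fold e; lra.
    - intro x. rewrite sumR_2. destruct x; unfold bsc; fold e; simpl; ring. }
  assert (columns : forall f : R -> R, (forall q, f (1 - q) = f q) ->
            sumR 2 (fun y => mass (bsc C) y * f (cross (bsc C) y)) = f e).
  { intros f hsym. rewrite sumR_2, (scaled_column _ 0%nat f 1 (1 - e)), (scaled_column _ 1%nat f 1 e), hsym
      by (unfold bsc; fold e; simpl; lra || ring). field. }
  split; [split; auto|split].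
  - exists (fun _ => 0%nat). split.
    + intros [|k]; unfold block; simpl; [apply perm_swap | apply Permutation_refl].
    + intros y y' hy hy' _. unfold bsc.
      destruct y as [|[|y]]; try lia; destruct y' as [|[|y']]; try lia;
        first [left; split; reflexivity | right; split; reflexivity].
  - rewrite capacity_columns, columns by (auto; apply Cbin_sym). auto.
  - rewrite gallagerF_columns, columns, Fbsc_Gbin by (auto; apply Gbin_sym). reflexivity.
Qed.

(* Every pair (C, t) between the two extremal curves is realised by a mixture: moving
   the crossover q from 0 to hinv (1 - C), with weight w = C / Cbin q fixing the
   capacity, the value of F sweeps continuously from Fbec rho C to Fbsc rho C. *)
Theorem admissible_pairs_achieved rho C t : -1 < rho -> 0 <= C <= 1 ->
  Fbec rho C <= t <= Fbsc rho C ->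
  exists (n : nat) (W : bool -> nat -> R), is_bims n W /\ capacity n W = C /\ gallagerF rho n W = t.
Proof.
  intros hr hC ht. exists 3%nat.
  destruct (bsc_crossover_spec C hC) as [hp hcp]. set (pC := hinv (1 - C)) in *.
  rewrite Fbsc_Gbin in ht. fold pC in ht.
  destruct (Req_dec C 0) as [e0|n0].
  - (* C = 0 forces t = 1: the pure erasure channel *)
    assert (hhalf : pC = / 2) by (apply Cbin_eq_0; lra). rewrite hhalf, Gbin_half in ht by auto.
    unfold Fbec in ht. rewrite e0 in ht |- *. exists (mixture 0 0). split; [apply mixture_is_bims; lra|].
    rewrite mixture_capacity, mixture_gallagerF by lra. split; lra.
  - assert (hcpos : forall q, 0 <= q <= pC -> C <= Cbin q) by (intros q hq; rewrite <- hcp; apply Cbin_anti; lra).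
    set (phi := fun q => 1 + C * (Gbin rho q - 1) / Cbin q).
    destruct (ivt_on_interval phi 0 pC t) as [q0 [hq0 e]]; [lra | | |].
    + intros q hq. pose proof (hcpos q hq). unfold phi.
      apply (continuity_pt_plus (fun _ => 1)); [apply continuity_pt_const; intros u v; reflexivity|].
      apply (continuity_pt_div (fun q => C * (Gbin rho q - 1)) Cbin); [| apply Cbin_continuity | lra].
      apply (continuity_pt_scal (fun q => Gbin rho q - 1)).
      apply (continuity_pt_minus (Gbin rho) (fun _ => 1)); [apply Gbin_continuity; auto|].
      apply continuity_pt_const; intros u v; reflexivity.
    + unfold phi. rewrite Gbin_0, Cbin_0, hcp. unfold Fbec in ht |- *.
      replace (1 + C * (Gbin rho pC - 1) / C) with (Gbin rho pC) by (field; auto). lra.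
    + pose proof (hcpos q0 hq0). set (w := C / Cbin q0).
      assert (hw : 0 <= w <= 1).
      { unfold w. split; [apply Rdiv_le_0_compat; lra|].
        apply (Rmult_le_reg_r (Cbin q0)); [lra | field_simplify; lra]. }
      exists (mixture w q0). split; [apply mixture_is_bims; lra|].
      rewrite mixture_capacity, mixture_gallagerF by lra. unfold w, phi in *. split; [field | rewrite <- e; field]; lra.
Qed.

Theorem theorem1 (rho : R) (hrho : -1 < rho) :
  (* (i)-(iii) for every BIMS channel *)
  (forall (n : nat) (W : bool -> nat -> R), is_bims n W ->
     Fbec rho (capacity n W) <= gallagerF rho n W <= Fbsc rho (capacity n W) /\
     (rho < 0 ->
        Cbsc rho (gallagerF rho n W) <= capacity n W <= Cbec rho (gallagerF rho n W)) /\
     (0 < rho ->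
        Cbec rho (gallagerF rho n W) <= capacity n W <= Cbsc rho (gallagerF rho n W))) /\
  (* the extremes are attained by the BEC and the BSC *)
  (forall C : R, 0 <= C <= 1 ->
     (is_bims 3 (bec C) /\ capacity 3 (bec C) = C /\
      gallagerF rho 3 (bec C) = Fbec rho C) /\
     (is_bims 2 (bsc C) /\ capacity 2 (bsc C) = C /\
      gallagerF rho 2 (bsc C) = Fbsc rho C)) /\
  (* every admissible pair (C, t) is achieved *)
  (forall C t : R, 0 <= C <= 1 -> Fbec rho C <= t <= Fbsc rho C ->
     exists (n : nat) (W : bool -> nat -> R),
       is_bims n W /\ capacity n W = C /\ gallagerF rho n W = t) /\
  (* and no other pair is *)
  (forall C t : R, 0 <= C <= 1 -> ~ (Fbec rho C <= t <= Fbsc rho C) ->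
     ~ exists (n : nat) (W : bool -> nat -> R),
       is_bims n W /\ capacity n W = C /\ gallagerF rho n W = t).
Proof.
  split; [|split; [|split]].
  - intros n W [hc _]. split; [split|].
    + apply gallagerF_ge_Fbec; auto.
    + apply gallagerF_le_Fbsc; auto.
    + apply capacity_between_inverses; auto.
  - intros C hC. split; [apply bec_extremal | apply bsc_extremal]; auto.
  - intros C t hC ht. apply admissible_pairs_achieved; auto.
  - intros C t hC hout [n [W [[hc _] [<- <-]]]]. apply hout. split.
    + apply gallagerF_ge_Fbec; auto.
    + apply gallagerF_le_Fbsc; auto.
Qed.
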